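(* On $\mathcal H$, the operator $H_{\rm string}$ is positive semidefinite, its nullspace is exactly $S_{\rm string}$, and its smallest nonzero eigenvalue is $2$; more precisely, each particle-position basis configuration (one occupied edge per line) whose occupied edges form $L$ connected components is an eigenvector of $H_{\rm string}$ with eigenvalue $2L-2$. Moreover $H_{\rm string}$ commutes with every $n_{e,\alpha}$ and with every $H^p_{\rm prop}$, hence with $H(\lambda)$ for all $\lambda\in[0,1]$.
   Context: Grid. Fix $n\ge1$. Vertices are $(i,j)$ with $i,j\in\{0,\dots,n\}$; $(0,0)$ is the top and $(n,n)$ the bottom vertex. For a vertex $(i,j)$ and $x\in\{0,1\}$, the edge $(i,j,x)$ joins $(i,j)$ (upper endpoint) to $(i+1-x,j+x)$ (lower endpoint), whenever the latter is a vertex. It lies on line $w=i+j+1$ and has horizontal coordinate $t=n+j-i+x$. $E_w$ is the set of edges on line $w$. $\mathcal H=\bigotimes_{w=1}^{2n}(\mathbb C^{E_w}\otimes\mathbb C^2)$ with basis $|e,\alpha\rangle_w$ (particle $w$ on edge $e$, qubit $\alpha$); $n_{e,\alpha}=|e,\alpha\rangle\langle e,\alpha|_w$, $N_e=n_{e,0}+n_{e,1}$. Strings: for $z\in\{0,1\}^{2n}$ of weight $n$, $v_0=(0,0)$, $v_s=(\#\{k\le s:z_k=0\},\#\{k\le s:z_k=1\})$, $e_s(z)=(i,j,z_s)$ with $(i,j)=v_{s-1}$; $|x\rangle|z\rangle=\bigotimes_w|e_w(z),x_w\rangle_w$; $S_{\rm string}=\mathrm{span}\{|x\rangle|z\rangle: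 x\in\{0,1\}^{2n},\mathrm{wt}(z)=n\}$. $H_{\rm string}=\sum_{v\notin\{(0,0),(n,n)\}}(N^{\rm up}_v+N^{\rm down}_v-2N^{\rm up}_vN^{\rm down}_v)$ where $N^{\rm up}_v$ (resp. $N^{\rm down}_v$) is the sum of $N_e$ over existing edges $e$ with lower (resp. upper) endpoint $v$. Plaquette $p=(i,j)$, $i,j\in\{0,\dots,n-1\}$: $w_p=i+j+1$, left edges $e_1=(i,j,0)$, $e_2=(i+1,j,1)$, right edges $e_3=(i,j,1)$, $e_4=(i,j+1,0)$, arbitrary two-qubit unitary $U_p$; $H^p_{\rm prop}=-\sum_{\alpha,\beta,\gamma,\delta}\langle\beta\delta|U_p|\alpha\gamma\rangle|e_3,\beta\rangle\langle e_1,\alpha|_{w_p}\otimes|e_4,\delta\rangle\langle e_2,\gamma|_{w_p+1}+\text{h.c.}$. $H(\lambda)=H_{\rm string}+\sum_p(N_{e_1}N_{e_2}+N_{e_3}N_{e_4}+\lambda H^p_{\rm prop})+\sqrt{1-\lambda^2}(N_{(0,0,1)}+N_{(n-1,n,0)})+\sum_w\sum_{e\in E_w,t(e)\le n}n_{e,1}$. *)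

From HB Require Import structures.
From mathcomp Require Import all_boot all_order all_algebra all_field.
Set Implicit Arguments. Unset Strict Implicit. Unset Printing Implicit Defensive.
Import Order.TTheory GRing.Theory Num.Theory.
Local Open Scope ring_scope.
Local Open Scope sesquilinear_scope.

Section Grid.
Variable n : nat.

(* Edge (i,j,x): upper endpoint (i,j); i,j in {0..n}. *)
Definition Edge := ('I_n.+1 * 'I_n.+1 * bool)%type.
Definition e_i (e : Edge) : nat := e.1.1.
Definition e_j (e : Edge) : nat := e.1.2.
Definition e_x (e : Edge) : bool := e.2.
Definition upper (e : Edge) : nat * nat := (e_i e, e_j e).
Definition lower (e : Edge) : nat * nat :=
  ((e_i e).+1 - e_x e, e_j e + e_x e)%N.
(* the edge exists iff its lower endpoint is a vertex *)
Definition edge_ok (e : Edge) : bool :=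
  ((e_i e).+1 - e_x e <= n)%N && (e_j e + e_x e <= n)%N.
Definition line (e : Edge) : nat := (e_i e + e_j e).+1.
Definition tcoord (e : Edge) : int := (n%:Z + (e_j e)%:Z - (e_i e)%:Z + (e_x e : nat)%:Z)%R.

(* Basis configurations: particle w (w = k+1 for k : 'I_(2n)) sits on an
   existing edge of line w, with a qubit value. *)
Definition conf_ok (c : {ffun 'I_(n.*2) -> Edge * bool}) : bool :=
  [forall k : 'I_(n.*2), edge_ok (c k).1 && (line (c k).1 == k.+1)].
Definition Conf := {c : {ffun 'I_(n.*2) -> Edge * bool} | conf_ok c}.
Definition cf (c : Conf) : {ffun 'I_(n.*2) -> Edge * bool} := val c.

Definition hdim := #|{: Conf}|.
Definition Op := 'M[algC]_hdim.
Definition conf_of (i : 'I_hdim) : Conf := enum_val i.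
Definition mkop (F : Conf -> Conf -> algC) : Op :=
  \matrix_(i, j) F (conf_of i) (conf_of j).
Definition ket (c : Conf) : 'cV[algC]_hdim := \col_i ((conf_of i == c)%:R).

(* |e',a'><e,a| acting on the particle of line (line e), identity elsewhere *)
Definition ketbra (e' : Edge) (a' : bool) (e : Edge) (a : bool) : Op :=
  mkop (fun c' c => ([forall k : 'I_(n.*2),
     if k.+1 == line e then (cf c' k == (e', a')) && (cf c k == (e, a))
     else cf c' k == cf c k])%:R).

Definition nop (e : Edge) (a : bool) : Op := ketbra e a e a.
Definition Nop (e : Edge) : Op := nop e false + nop e true.

Definition Nup (v : nat * nat) : Op :=
  \sum_(e : Edge | edge_ok e && (lower e == v)) Nop e.
Definition Ndown (v : nat * nat) : Op :=
  \sum_(e : Edge | edge_ok e && (upper e == v)) Nop e.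

Definition is_vertex (v : nat * nat) : bool := (v.1 <= n)%N && (v.2 <= n)%N.

Definition Hstring : Op :=
  \sum_(v : 'I_n.+1 * 'I_n.+1 |
        ((val v.1, val v.2) != (0%N, 0%N)) && ((val v.1, val v.2) != (n, n)))
    (Nup (val v.1, val v.2) + Ndown (val v.1, val v.2)
     - (Nup (val v.1, val v.2) *m Ndown (val v.1, val v.2)) *+ 2).

(* Strings: z in {0,1}^{2n} of weight n; the s-th edge (s = k+1) starts at
   v_{s-1} = (#{l<k : z_l = 0}, #{l<k : z_l = 1}) and has x = z_s. *)
Definition str_edge (z : {ffun 'I_(n.*2) -> bool}) (k : 'I_(n.*2)) (e : Edge) : bool :=
  [&& e_i e == #|[set l : 'I_(n.*2) | (l < k)%N & ~~ z l]|,
      e_j e == #|[set l : 'I_(n.*2) | (l < k)%N & z l]| &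
      e_x e == z k].
Definition is_string (c : Conf) : bool :=
  [exists z : {ffun 'I_(n.*2) -> bool},
     (#|[set k | z k]| == n) && [forall k, str_edge z k (cf c k).1]].

Definition occupied (c : Conf) : {set Edge} := [set (cf c k).1 | k : 'I_(n.*2)].
Definition share (e f : Edge) : bool :=
  [|| upper e == upper f, upper e == lower f, lower e == upper f | lower e == lower f].
Definition occ_adj (c : Conf) : rel Edge :=
  fun e f => [&& e \in occupied c, f \in occupied c & share e f].
Definition ncomp (c : Conf) : nat := n_comp (occ_adj c) (occupied c).

Definition psdmx (A : Op) : Prop :=
  A = A ^t* /\ forall v : 'cV[algC]_hdim, 0 <= ((v ^t*) *m A *m v) 0 0.

Definition pl_e1 (i j : 'I_n) : Edge := (widen_ord (leqnSn n) i, widen_ord (leqnSn n) j, false).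
Definition pl_e2 (i j : 'I_n) : Edge := (lift ord0 i, widen_ord (leqnSn n) j, true).
Definition pl_e3 (i j : 'I_n) : Edge := (widen_ord (leqnSn n) i, widen_ord (leqnSn n) j, true).
Definition pl_e4 (i j : 'I_n) : Edge := (widen_ord (leqnSn n) i, lift ord0 j, false).

Definition qidx (a b : bool) : 'I_4 := inord (2 * a + b)%N.

Definition Hprop (U : 'M[algC]_4) (i j : 'I_n) : Op :=
  let A := \sum_(a : bool) \sum_(b : bool) \sum_(g : bool) \sum_(d : bool)
     (U (qidx b d) (qidx a g) *: (ketbra (pl_e3 i j) b (pl_e1 i j) a
                                   *m ketbra (pl_e4 i j) d (pl_e2 i j) g)) in
  - A - A ^t*.

Definition Hlam (U : 'I_n -> 'I_n -> 'M[algC]_4) (lam : algC) : Op :=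
  Hstring
  + \sum_(i : 'I_n) \sum_(j : 'I_n)
      (Nop (pl_e1 i j) *m Nop (pl_e2 i j) + Nop (pl_e3 i j) *m Nop (pl_e4 i j)
       + lam *: Hprop (U i j) i j)
  + sqrtC (1 - lam ^+ 2) *: (\sum_(e : Edge | (e_i e == 0%N) && (e_j e == 0%N) && e_x e) Nop e
                             + \sum_(e : Edge | (e_i e == n.-1) && (e_j e == n) && ~~ e_x e) Nop e)
  + \sum_(e : Edge | edge_ok e && (tcoord e <= n%:Z)%R) nop e true.

End Grid.

From HB Require Import structures.
From mathcomp Require Import all_boot all_order all_algebra all_field.
From mathcomp Require Import zify.
Import Order.TTheory GRing.Theory Num.Theory.
Set Implicit Arguments. Unset Strict Implicit. Unset Printing Implicit Defensive.
Local Open Scope ring_scope.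
Local Open Scope sesquilinear_scope.

(* The occupation operators are diagonal in the configuration basis, hence so
   is H_string.  Every line carries exactly one particle, so at a vertex v on
   which lines w and w+1 meet, N^up_v + N^down_v - 2 N^up_v N^down_v is 1 exactly
   when v is an endpoint of one but not both of the particles of lines w and
   w+1.  Summing over interior vertices, H_string multiplies a configuration by
   twice its number of breaks, the junctions where consecutive particles do not
   meet.  The connected components are the maximal unbroken runs of particles
   and the strings are the configurations without breaks; a configuration with
   a single break shows that the gap 2 is attained.  A propagation term swaps
   the two paths of a plaquette, which share their endpoints and are unbroken,
   so it preserves the number of breaks and commutes with H_string. *)

Lemma comm_mxZ (R : comPzRingType) k (A X : 'M[R]_k) a :
  comm_mx A X -> comm_mx A (a *: X).
Proof. by rewrite /comm_mx -scalemxAr -scalemxAl => ->. Qed.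

Lemma comm_mx_adj (C : numClosedFieldType) k (A X : 'M[C]_k) :
  A ^t* = A -> comm_mx A X -> comm_mx A (X ^t*).
Proof.
rewrite /comm_mx => hA AX.
by rewrite -{1}hA -[X in _ = _ *m X]hA -!map_mxM -!trmx_mul AX.
Qed.

Lemma sumr_pred1 (R : pzSemiRingType) (T : finType) (x : T) (P : pred T) :
  \sum_(y | P y) ((x == y)%:R : R) = (P x)%:R.
Proof.
rewrite big_mkcond (bigD1 x) //= eqxx big1 ?addr0 => [|y]; first by case: (P x).
by rewrite eq_sym => /negPf ->; case: (P y).
Qed.

Lemma natr_addb (R : pzRingType) (b1 b2 : bool) :
  ((b1 (+) b2 : nat)%:R : R) = b1%:R + b2%:R - (b1%:R * b2%:R) *+ 2.
Proof.
by case: b1; case: b2; rewrite /= ?mulr0 ?mul0r ?mulr1 ?mul0rn ?subr0 ?addr0 ?add0r //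
   -mulr2n subrr.
Qed.

Lemma sum_addb_codom (T : finType) (U : eqType) (f : T -> U) (x y : U) :
  injective f -> x \in codom f -> y \in codom f ->
  (\sum_t ((x == f t) (+) (y == f t)) = (x != y).*2)%N.
Proof.
move=> f_inj /codomP[a ->] /codomP[b ->]; rewrite (inj_eq f_inj).
under eq_bigr do rewrite (inj_eq f_inj) (inj_eq f_inj).
have [<-|ab] := eqVneq a b; first by rewrite big1 // => t _; rewrite addbb.
rewrite (bigD1 a) // (bigD1 b) 1?eq_sym //= big1 => [|t /andP[ta tb]].
  by rewrite !eqxx (negPf ab).
by rewrite ![_ == t]eq_sym (negPf ta) (negPf tb).
Qed.

Section DiagonalOperators.
Variable n : nat.
Local Notation Conf := (Conf n).
Local Notation Op := (Op n).

Definition diagop (h : Conf -> algC) : Op := diag_mx (\row_i h (conf_of i)).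

Lemma diagopE h i j : diagop h i j = h (conf_of i) *+ (i == j).
Proof. by rewrite !mxE. Qed.

Lemma eq_diagop f g : f =1 g -> diagop f = diagop g.
Proof. by move=> fg; congr diag_mx; apply/rowP => i; rewrite !mxE. Qed.

Lemma diagopD f g : diagop f + diagop g = diagop (fun c => f c + g c).
Proof. by rewrite -raddfD; congr diag_mx; apply/rowP => i; rewrite !mxE. Qed.

Lemma diagopN f : - diagop f = diagop (fun c => - f c).
Proof. by rewrite -raddfN; congr diag_mx; apply/rowP => i; rewrite !mxE. Qed.

Lemma diagopMn f k : diagop f *+ k = diagop (fun c => f c *+ k).
Proof.
by rewrite /diagop -raddfMn; congr diag_mx; apply/rowP => i; rewrite mulmxnE !mxE.
Qed.

Lemma diagop_sum (I : Type) (r : seq I) (P : pred I) (F : I -> Conf -> algC) :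
  \sum_(x <- r | P x) diagop (F x) = diagop (fun c => \sum_(x <- r | P x) F x c).
Proof.
rewrite /diagop -raddf_sum; congr diag_mx; apply/rowP => i.
by rewrite summxE !mxE; apply: eq_bigr => x _; rewrite mxE.
Qed.

Lemma mul_diagop f g : diagop f *m diagop g = diagop (fun c => f c * g c).
Proof. by rewrite mulmx_diag; congr diag_mx; apply/rowP => i; rewrite !mxE. Qed.

Lemma mul_diagop_mx h p (A : 'M_(hdim n, p)) :
  diagop h *m A = \matrix_(i, j) (h (conf_of i) * A i j).
Proof. by rewrite mul_diag_mx; apply/matrixP => i j; rewrite !mxE. Qed.

Lemma mul_mx_diagop h p (A : 'M_(p, hdim n)) :
  A *m diagop h = \matrix_(i, j) (A i j * h (conf_of j)).
Proof. by rewrite mul_mx_diag; apply/matrixP => i j; rewrite !mxE. Qed.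

Lemma diagop_ket h c : diagop h *m ket c = h c *: ket c.
Proof.
rewrite mul_diagop_mx; apply/matrixP => i j; rewrite !mxE.
by case: eqP => [->|_]; rewrite ?mulr0.
Qed.

Lemma diagop_psd (h : Conf -> algC) : (forall c, 0 <= h c) -> psdmx (diagop h).
Proof.
move=> h_ge0; split.
  apply/matrixP => i j; rewrite !mxE eq_sym.
  by case: eqVneq => [->|_]; rewrite ?mulr0n ?rmorph0 // !mulr1n geC0_conj.
move=> v; rewrite mul_mx_diagop mxE; apply: sumr_ge0 => j _; rewrite !mxE.
by rewrite mulrAC mulr_ge0 // mulrC mul_conjC_ge0.
Qed.

Lemma diagop_mulmx_eq0 h (v : 'cV_(hdim n)) :
  diagop h *m v = 0 <-> forall i, h (conf_of i) != 0 -> v i ord0 = 0.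
Proof.
rewrite mul_diagop_mx; split.
  by move/matrixP => vh i hi; have /eqP := vh i 0; rewrite !mxE mulf_eq0 (negPf hi) => /eqP.
move=> vh; apply/matrixP => i j; rewrite !mxE ord1.
by have [->|/vh ->] := eqVneq (h (conf_of i)) 0; rewrite ?mul0r ?mulr0.
Qed.

Lemma eigenvalue_diagop h a : eigenvalue (diagop h) a <-> exists c, h c = a.
Proof.
split=> [/eigenvalueP[v vh v_neq0] | [c <-]].
  have [j vj] : exists j, v 0 j != 0.
    apply/existsP; apply: contraR v_neq0 => /existsPn v0.
    by apply/eqP/matrixP => i j; rewrite ord1 !mxE; apply/eqP/negPn/v0.
  exists (conf_of j); move/matrixP: vh => /(_ 0 j).
  by rewrite mul_mx_diagop !mxE mulrC => /(mulIf vj).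
apply/eigenvalueP; exists (ket c)^T.
  by rewrite -[diagop h]tr_diag_mx -trmx_mul diagop_ket linearZ.
apply/eqP => /matrixP /(_ 0 (enum_rank c)).
by rewrite !mxE /conf_of enum_rankK eqxx => /eqP; rewrite oner_eq0.
Qed.

Lemma comm_mx_diagop f g : comm_mx (diagop f) (diagop g).
Proof. exact: diag_mxC. Qed.

Lemma comm_mx_diagopP h (X : Op) :
  (forall i j, X i j != 0 -> h (conf_of i) = h (conf_of j)) -> comm_mx (diagop h) X.
Proof.
move=> hX; rewrite /comm_mx mul_diagop_mx mul_mx_diagop; apply/matrixP => i j.
by rewrite !mxE; have [->|/hX ->] := eqVneq (X i j) 0; rewrite ?mulr0 ?mul0r // mulrC.
Qed.

End DiagonalOperators.

Section Configurations.
Variable n : nat.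
Local Notation m := (n.*2).
Local Notation Conf := (Conf n).
Local Notation Edge := (Edge n).

Definition vtx (v : 'I_n.+1 * 'I_n.+1) : nat * nat := (val v.1, val v.2).

Lemma vtx_inj : injective vtx.
Proof. by move=> [a b] [a' b'] [/val_inj-> /val_inj->]. Qed.

Lemma upper_in_codom (e : Edge) : upper e \in codom vtx.
Proof. exact: codom_f. Qed.

Lemma lower_in_codom (e : Edge) : edge_ok e -> lower e \in codom vtx.
Proof.
case/andP => le1 le2; apply/codomP; exists (inord (lower e).1, inord (lower e).2).
by rewrite /vtx /= !inordK ?ltnS //; case: (lower e).
Qed.

Lemma upper_sum (e : Edge) : ((upper e).1 + (upper e).2).+1 = line e.
Proof. by []. Qed.

Lemma lower_sum (e : Edge) : ((lower e).1 + (lower e).2)%N = line e.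
Proof. by rewrite /lower /line /=; case: (e_x e) => /=; lia. Qed.

(* The edge occupied on line [k.+1]; a dummy edge when [k >= 2n]. *)
Definition pedge (c : Conf) (k : nat) : Edge :=
  if insub k is Some o then (cf c o).1 else (ord0, ord0, false).

Lemma pedge_ord c (o : 'I_m) : pedge c o = (cf c o).1.
Proof. by rewrite /pedge valK. Qed.

Lemma pedgeP c k : (k < m)%N -> edge_ok (pedge c k) /\ line (pedge c k) = k.+1.
Proof.
move=> lt_km; have /forallP/(_ (Ordinal lt_km))/andP[ok /eqP l] := valP c.
by rewrite -[k]/(val (Ordinal lt_km)) pedge_ord.
Qed.

Definition occ (e : Edge) (a : bool) (c : Conf) : algC :=
  [forall k : 'I_m, (k.+1 == line e) ==> (cf c k == (e, a))]%:R.

Lemma nop_diagop e a : nop e a = diagop (occ e a).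
Proof.
apply/matrixP => i j; rewrite diagopE !mxE /occ.
have [<-|ij] := eqVneq i j.
  rewrite mulr1n; congr ((nat_of_bool _)%:R); apply: eq_forallb => k.
  by case: ifP => _; rewrite ?andbb ?eqxx.
rewrite mulr0n; case: forallP => // same; case/eqP: ij; apply: enum_val_inj.
apply: val_inj; apply/ffunP => k.
by move: (same k); case: ifP => [_ /andP[/eqP-> /eqP->] | _ /eqP].
Qed.

Lemma Nop_diagop e : Nop e = diagop (fun c => occ e false c + occ e true c).
Proof. by rewrite /Nop !nop_diagop diagopD. Qed.

Lemma occ_total e c : edge_ok e ->
  occ e false c + occ e true c = (pedge c (line e).-1 == e)%:R.
Proof.
move=> ok; have lt : ((line e).-1 < m)%N.
  by move: ok; rewrite /edge_ok /line; have := ltn_ord e.1.1; case: (e_x e) => /=; lia.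
have occE a : occ e a c = (cf c (Ordinal lt) == (e, a))%:R.
  congr ((nat_of_bool _)%:R); apply/forallP/idP => [/(_ (Ordinal lt))/implyP-> // | eq_k k].
  apply/implyP => /eqP k_line; suff -> : k = Ordinal lt by [].
  by apply: val_inj => /=; move: k_line; rewrite /line => -[].
rewrite !occE -[(line e).-1]/(val (Ordinal lt)) pedge_ord.
by case: (cf c _) => e' []; rewrite !xpair_eqE ?andbT ?andbF ?addr0 ?add0r.
Qed.

Lemma Nup_diagop (p : nat * nat) : (0 < p.1 + p.2 <= m)%N ->
  Nup n p = diagop (fun c => (lower (pedge c (p.1 + p.2).-1) == p)%:R).
Proof.
move=> /andP[p_gt0 p_le]; pose k := (p.1 + p.2).-1.
have lt_km : (k < m)%N by rewrite /k; lia.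
rewrite /Nup (eq_bigr (fun e => diagop (fun c => (pedge c k == e)%:R))).
  rewrite diagop_sum; apply: eq_diagop => c; rewrite sumr_pred1.
  by case: (pedgeP c lt_km) => ->.
move=> e /andP[ok /eqP low]; rewrite Nop_diagop; apply: eq_diagop => c.
by rewrite occ_total // /k -low lower_sum.
Qed.

Lemma Ndown_diagop (p : nat * nat) : (p.1 + p.2 < m)%N ->
  Ndown n p = diagop (fun c => (upper (pedge c (p.1 + p.2)) == p)%:R).
Proof.
move=> lt_pm; rewrite /Ndown.
rewrite (eq_bigr (fun e => diagop (fun c => (pedge c (p.1 + p.2) == e)%:R))).
  rewrite diagop_sum; apply: eq_diagop => c; rewrite sumr_pred1.
  by case: (pedgeP c lt_pm) => ->.
move=> e /andP[ok /eqP up]; rewrite Nop_diagop; apply: eq_diagop => c.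
by rewrite occ_total // -up.
Qed.

Definition interior (v : 'I_n.+1 * 'I_n.+1) : bool :=
  (vtx v != (0%N, 0%N)) && (vtx v != (n, n)).

Lemma interiorE v : interior v = (0 < v.1 + v.2 < m)%N.
Proof.
case: v => [a b]; rewrite /interior /vtx /= !xpair_eqE.
have := ltn_ord a; have := ltn_ord b; rewrite -addnn.
by case: (ltnP 0 _); case: (ltnP (a + b) _) => /=; try lia; rewrite ?andbT ?andbF; lia.
Qed.

(* The value of N^up_p + N^down_p - 2 N^up_p N^down_p at a vertex [p] of line-sum [k.+1]. *)
Definition junction (c : Conf) (k : nat) (p : nat * nat) : bool :=
  (lower (pedge c k) == p) (+) (upper (pedge c k.+1) == p).

Lemma Hstring_diagop : Hstring n =
  diagop (fun c => (\sum_(v | interior v) junction c (v.1 + v.2).-1 (vtx v))%N%:R).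
Proof.
under eq_diagop do rewrite natr_sum.
rewrite -diagop_sum; apply: eq_bigr => v int_v.
have /andP[v_gt0 v_lt] : (0 < v.1 + v.2 < m)%N by rewrite -interiorE.
rewrite (@Nup_diagop (vtx v)) ?v_gt0 1?ltnW // (@Ndown_diagop (vtx v)) //.
rewrite mul_diagop diagopMn diagopN !diagopD; apply: eq_diagop => c.
by rewrite natr_addb /junction prednK.
Qed.

Definition breaks (c : Conf) : nat :=
  (\sum_(k < m.-1) (lower (pedge c k) != upper (pedge c k.+1)))%N.

Lemma junction_line c k p : junction c k p -> (k.+1 < m)%N -> (p.1 + p.2)%N = k.+1.
Proof.
move=> + lt_k1m; have [_ line_k] := pedgeP c (ltnW lt_k1m).
have [_ line_k1] := pedgeP c lt_k1m.
rewrite /junction; case: eqP => [<- _ | _ /= /eqP <-]; first by rewrite lower_sum.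
by move: line_k1; rewrite /line => -[].
Qed.

Lemma sum_junction c k : (k.+1 < m)%N ->
  (\sum_v junction c k (vtx v))%N = (lower (pedge c k) != upper (pedge c k.+1)).*2.
Proof.
move=> lt_k1m; rewrite /junction.
apply: sum_addb_codom; [exact: vtx_inj | | exact: upper_in_codom].
by apply: lower_in_codom; case: (pedgeP c (ltnW lt_k1m)).
Qed.

Lemma sum_interior_junction c :
  (\sum_(v | interior v) junction c (v.1 + v.2).-1 (vtx v) = (breaks c).*2)%N.
Proof.
rewrite big_mkcond (eq_bigr (fun v => \sum_(k < m.-1) junction c k (vtx v))%N); last first.
  move=> v _; case: ifPn => [int_v | not_int].
    move: int_v; rewrite interiorE => /andP[v_gt0 v_lt].
    have lt_v : ((v.1 + v.2).-1 < m.-1)%N by lia.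
    rewrite (bigD1 (Ordinal lt_v)) //= big1 ?addn0 // => k /eqP k_ne.
    apply/eqP; rewrite eqb0; apply/negP => /junction_line j_line; apply: k_ne.
    have lt_k1m : (k.+1 < m)%N by have := ltn_ord k; lia.
    by apply: val_inj => /=; have := j_line lt_k1m; rewrite /vtx /=; lia.
  rewrite big1 // => k _; apply/eqP; rewrite eqb0; apply: contra not_int.
  rewrite interiorE => /junction_line j_line; have lt_k1m : (k.+1 < m)%N by have := ltn_ord k; lia.
  by have := j_line lt_k1m; rewrite /vtx /=; lia.
rewrite exchange_big /breaks -[RHS]mul2n big_distrr /=.
by apply: eq_bigr => k _; rewrite mul2n sum_junction //; have := ltn_ord k; lia.
Qed.

Lemma Hstring_breaks : Hstring n = diagop (fun c => (breaks c).*2%:R).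
Proof.
by rewrite Hstring_diagop; apply: eq_diagop => c; rewrite sum_interior_junction.
Qed.

End Configurations.

Section Components.
Variables (n : nat) (c : Conf n).
Local Notation m := (n.*2).
Local Notation Edge := (Edge n).
Local Open Scope nat_scope.

Definition is_break k := lower (pedge c k) != upper (pedge c k.+1).
Definition breaks_before k := \sum_(l < k) is_break l.

Lemma breaksE : breaks c = breaks_before m.-1.
Proof. by []. Qed.

Lemma breaks_before0 : breaks_before 0 = 0.
Proof. exact: big_ord0. Qed.

Lemma breaks_beforeS k : breaks_before k.+1 = breaks_before k + is_break k.
Proof. by rewrite /breaks_before big_ord_recr. Qed.

Lemma breaks_before_homo : {homo breaks_before : k l / k <= l}.
Proof.
apply: (@homo_leq _ breaks_before leq) => [//|y x z|k]; first exact: leq_trans.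
by rewrite breaks_beforeS leq_addr.
Qed.

Lemma no_break_between k l t :
  k <= t < l -> breaks_before k = breaks_before l -> is_break t = false.
Proof.
case/andP => kt tl eq_kl; have := breaks_before_homo kt; have := breaks_before_homo tl.
by rewrite breaks_beforeS -eq_kl; case: (is_break t) => //=; lia.
Qed.

Lemma breaks_before_onto K y :
  y <= breaks_before K -> exists2 t, t <= K & breaks_before t = y.
Proof.
elim: K y => [|K IH] y.
  by rewrite breaks_before0 leqn0 => /eqP->; exists 0; rewrite ?breaks_before0.
have [le_yK _|lt_Ky] := leqP y (breaks_before K).
  by have [t ht <-] := IH _ le_yK; exists t => //; apply: leqW.
by rewrite breaks_beforeS; exists K.+1 => //; move: lt_Ky; rewrite breaks_beforeS; lia.
Qed.

(* The connected component of an occupied edge is numbered by the breaks below it. *)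
Definition block (e : Edge) := breaks_before (line e).-1.

Lemma block_pedge k : k < m -> block (pedge c k) = breaks_before k.
Proof. by move=> /(pedgeP c)[_ line_k]; rewrite /block line_k. Qed.

Lemma pedge_occupied k : k < m -> pedge c k \in occupied c.
Proof.
move=> lt_km; apply/imsetP; exists (Ordinal lt_km) => //.
exact: (pedge_ord c (Ordinal lt_km)).
Qed.

Lemma occupiedP e : reflect (exists2 k, k < m & e = pedge c k) (e \in occupied c).
Proof.
apply: (iffP imsetP) => [[k _ ->] | [k lt_km ->]]; first by exists k; rewrite ?pedge_ord.
by exists (Ordinal lt_km) => //; exact: (pedge_ord c (Ordinal lt_km)).
Qed.

Lemma share_sym : symmetric (@share n).
Proof.
move=> e f; rewrite /share ![upper f == _]eq_sym ![lower f == _]eq_sym.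
by case: (upper e == upper f); case: (upper e == lower f); case: (lower e == upper f).
Qed.

Lemma occ_adj_connect_sym : connect_sym (occ_adj c).
Proof.
apply: sym_connect_sym => e f; rewrite /occ_adj share_sym.
by case: (e \in occupied c); case: (f \in occupied c).
Qed.

Lemma occ_adj_block e f : occ_adj c e f -> block e = block f.
Proof.
case/and3P => /occupiedP[k hk ->] /occupiedP[l hl ->] /or4P shared.
rewrite !block_pedge //; have [_ line_k] := pedgeP c hk; have [_ line_l] := pedgeP c hl.
have lk := lower_sum (pedge c k); have ll := lower_sum (pedge c l).
have uk := upper_sum (pedge c k); have ul := upper_sum (pedge c l).
rewrite line_k in lk uk; rewrite line_l in ll ul.
case: shared => /eqP shared; rewrite ?shared in lk uk.
- by have -> : k = l by lia.
- have E : k = l.+1 by lia.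
  by subst k; rewrite breaks_beforeS /is_break shared eqxx addn0.
- have E : l = k.+1 by lia.
  by subst l; rewrite breaks_beforeS /is_break shared eqxx addn0.
- by have -> : k = l by lia.
Qed.

Lemma block_connect e f : e \in occupied c -> f \in occupied c -> block e = block f ->
  connect (occ_adj c) e f.
Proof.
move=> /occupiedP[k hk ->] /occupiedP[l hl ->]; rewrite !block_pedge //.
wlog kl : k l hk hl / k <= l.
  move=> W eq_kl; have [le_kl|lt_lk] := leqP k l; first exact: W.
  by rewrite occ_adj_connect_sym; apply: W => //; apply: ltnW.
move=> eq_kl; suff conn t : k <= t <= l -> connect (occ_adj c) (pedge c k) (pedge c t).
  by apply: conn; rewrite leqnn kl.
elim: t => [|t IH] /andP[kt tl]; first by move: kt; rewrite leqn0 => /eqP->.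
move: kt; rewrite leq_eqVlt => /orP[/eqP-> // | kt].
apply: connect_trans (IH _) _; first by rewrite -ltnS kt ltnW.
have lt_t1m : t.+1 < m by lia.
apply: connect1; rewrite /occ_adj (pedge_occupied (ltnW lt_t1m)) (pedge_occupied lt_t1m) /=.
have /negbFE/eqP shared := no_break_between (t := t) (introT andP (conj kt tl)) eq_kl.
by rewrite /share shared eqxx !orbT.
Qed.

Lemma block_le_breaks e : e \in occupied c -> block e <= breaks c.
Proof.
by case/occupiedP => k hk ->; rewrite block_pedge // breaksE breaks_before_homo //; lia.
Qed.

Lemma ncomp_breaks : 0 < n -> ncomp c = (breaks c).+1.
Proof.
move=> n_gt0; rewrite /ncomp /n_comp_mem.
set R := [set x | roots (occ_adj c) x && (x \in occupied c)].
have -> : #|predI (roots (occ_adj c)) (mem (occupied c))| = #|R| by rewrite cardsE.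
have lt_block e : e \in occupied c -> block e < (breaks c).+1.
  by move=> occ_e; rewrite ltnS block_le_breaks.
pose f e : 'I_(breaks c).+1 := inord (block e).
have f_inj : {in R &, injective f}.
  move=> x y; rewrite !inE => /andP[rx ox] /andP[ry oy] /(congr1 val).
  rewrite /f /= !inordK ?lt_block // => /(block_connect ox oy).
  move/(fingraph.rootP occ_adj_connect_sym) => same_root.
  by rewrite -(eqP rx) -(eqP ry) same_root.
rewrite -(card_in_imset f_inj).
suff -> : [set f x | x in R] = [set: 'I_(breaks c).+1] by rewrite cardsT card_ord.
apply/setP => y; rewrite inE; apply/imsetP.
have [t le_t ty] : exists2 t, t <= m.-1 & breaks_before t = y.
  by apply: breaks_before_onto; rewrite -breaksE -ltnS.
have lt_tm : t < m by lia.
have closed_occ : closed (occ_adj c) (occupied c).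
  by move=> x z /and3P[ox oz _]; rewrite ox oz.
have conn_root := connect_root (occ_adj c) (pedge c t).
have occ_root : fingraph.root (occ_adj c) (pedge c t) \in occupied c.
  by rewrite -(closed_connect closed_occ conn_root) pedge_occupied.
exists (fingraph.root (occ_adj c) (pedge c t)).
  by rewrite inE occ_root roots_root //; exact: occ_adj_connect_sym.
apply: val_inj; rewrite /f /= inordK ?lt_block //.
have closed_block : closed (occ_adj c) [pred z | block z == block (pedge c t)].
  by move=> x z /occ_adj_block; rewrite !inE => ->.
have := closed_connect closed_block conn_root; rewrite !inE eqxx => /esym/eqP->.
by rewrite block_pedge.
Qed.

End Components.

Section Strings.
Variable n : nat.
Local Notation m := (n.*2).
Local Open Scope nat_scope.

Lemma breaks_eq0P (c : Conf n) :
  reflect (forall k, k.+1 < m -> lower (pedge c k) = upper (pedge c k.+1)) (breaks c == 0).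
Proof.
rewrite /breaks sum_nat_eq0; apply: (iffP forallP) => [no_break k lt_k1m | meet k].
  have lt_k : k < m.-1 by lia.
  by have /implyP/(_ isT) := no_break (Ordinal lt_k); rewrite eqb0 negbK => /eqP.
by apply/implyP => _; rewrite eqb0 negbK meet //; have := ltn_ord k; lia.
Qed.

Definition count_below (z : pred 'I_m) (k : nat) := #|[set l : 'I_m | (l < k) & z l]|.

Lemma count_below0 z : count_below z 0 = 0.
Proof. exact: cards0. Qed.

Lemma count_belowS z (o : 'I_m) : count_below z o.+1 = count_below z o + z o.
Proof.
rewrite /count_below; case zo: (z o).
  have -> : [set l : 'I_m | (l < o.+1) & z l] = o |: [set l : 'I_m | (l < o) & z l].
    apply/setP => l; rewrite !inE ltnS leq_eqVlt val_eqE.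
    by case: (eqVneq l o) => [->|]; rewrite ?zo ?ltnn.
  by rewrite cardsU1 inE ltnn /= addnC.
rewrite addn0; apply: eq_card => l; rewrite !inE ltnS leq_eqVlt val_eqE.
by case: (eqVneq l o) => [->|]; rewrite ?zo ?ltnn ?andbF.
Qed.

Lemma string_breaks (c : Conf n) : is_string c -> breaks c = 0.
Proof.
case/existsP => z /andP[_ /forallP on_z]; apply/eqP/breaks_eq0P => k lt_k1m.
have lt_km : k < m by lia.
move: (on_z (Ordinal lt_km)) (on_z (Ordinal lt_k1m)); rewrite -!pedge_ord /str_edge /=.
case/and3P => /eqP i0 /eqP j0 /eqP x0 /and3P[/eqP i1 /eqP j1 _].
have := count_belowS (fun l => ~~ z l) (Ordinal lt_km).
have := count_belowS z (Ordinal lt_km).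
rewrite /count_below /lower /upper /= i0 j0 x0 i1 j1 => -> ->.
by case: (z (Ordinal lt_km)) => /=; congr pair; lia.
Qed.

Definition direction (c : Conf n) : {ffun 'I_m -> bool} :=
  [ffun k : 'I_m => e_x (pedge c k)].

Lemma no_break_coords (c : Conf n) k : breaks c = 0 -> k < m ->
  e_i (pedge c k) = count_below (fun l => ~~ direction c l) k /\
  e_j (pedge c k) = count_below (direction c) k.
Proof.
move/eqP/breaks_eq0P => meet; elim: k => [|k IH] lt_k1m.
  have [_] := pedgeP c lt_k1m; rewrite -upper_sum !count_below0 => -[]; lia.
have lt_km : k < m by lia.
have [i_k j_k] := IH lt_km; move: (meet k lt_k1m); rewrite /lower /upper => -[<- <-].
rewrite -[k.+1]/((Ordinal lt_km).+1) !count_belowS /= -i_k -j_k ffunE.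
by case: (e_x (pedge c k)); split; lia.
Qed.

Lemma breaks0_string (c : Conf n) : 0 < n -> breaks c = 0 -> is_string c.
Proof.
move=> n_gt0 no_break; apply/existsP; exists (direction c); apply/andP; split.
  have lt_last : m.-1 < m by lia.
  have [i_last j_last] := no_break_coords no_break lt_last.
  have [ok_last line_last] := pedgeP c lt_last.
  have -> : #|[set k | direction c k]| = count_below (direction c) (Ordinal lt_last).+1.
    by rewrite /count_below /= prednK; [apply: eq_card => l; rewrite !inE ltn_ord | lia].
  rewrite count_belowS -j_last /= ffunE.
  have := lower_sum (pedge c m.-1); move: ok_last; rewrite line_last /edge_ok /lower /=.
  by case: (e_x _) => /=; lia.
apply/forallP => k; rewrite -pedge_ord /str_edge.
have [i_k j_k] := no_break_coords no_break (ltn_ord k).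
by rewrite i_k j_k ffunE !eqxx.
Qed.

Lemma is_string_breaks (c : Conf n) : 0 < n -> is_string c = (breaks c == 0).
Proof.
move=> n_gt0; apply/idP/eqP; first exact: string_breaks.
exact: breaks0_string.
Qed.

End Strings.

Section OneBreak.
Variable n : nat.
Hypothesis n_gt0 : (0 < n)%N.
Local Notation m := (n.*2).
Local Open Scope nat_scope.

(* Walk along the top side and down the right side of the grid, except that the
   first step goes down: exactly one break, between lines 1 and 2. *)
Definition hook_edge (k : nat) : nat * nat * bool :=
  if k == 0 then (0, 0, true) else if k < n then (k, 0, false) else (n, k - n, true).

Definition mk_edge (p : nat * nat * bool) : Edge n := (inord p.1.1, inord p.1.2, p.2).

Lemma hook_edge_bounds k : k < m -> (hook_edge k).1.1 <= n /\ (hook_edge k).1.2 <= n.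
Proof.
by rewrite /hook_edge -addnn; case: eqP => _ /=; [|case: (ltnP k n) => /=]; split; lia.
Qed.

Lemma mk_edgeE p : p.1.1 <= n -> p.1.2 <= n ->
  e_i (mk_edge p) = p.1.1 /\ e_j (mk_edge p) = p.1.2 /\ e_x (mk_edge p) = p.2.
Proof. by move=> le1 le2; rewrite /e_i /e_j /= !inordK. Qed.

Lemma hook_edge_ok k : k < m ->
  edge_ok (mk_edge (hook_edge k)) && (line (mk_edge (hook_edge k)) == k.+1).
Proof.
move=> lt_km; have [b1 b2] := hook_edge_bounds lt_km.
rewrite /edge_ok /line /lower; have [-> [-> ->]] := mk_edgeE b1 b2.
move: lt_km; rewrite -addnn /hook_edge; case: eqP => [-> | k_ne0] /=; first by lia.
by case: (ltnP k n) => /= lt_kn lt_k; lia.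
Qed.

Definition hook_fun : {ffun 'I_m -> Edge n * bool} :=
  [ffun k : 'I_m => (mk_edge (hook_edge k), false)].

Lemma hook_fun_ok : conf_ok hook_fun.
Proof. by apply/forallP => k; rewrite ffunE hook_edge_ok. Qed.

Definition hook_conf : Conf n := exist _ hook_fun hook_fun_ok.

Lemma pedge_hook k : k < m -> pedge hook_conf k = mk_edge (hook_edge k).
Proof. by move=> lt_km; rewrite -[k]/(val (Ordinal lt_km)) pedge_ord ffunE. Qed.

Lemma hook_is_break k : k.+1 < m -> is_break hook_conf k = (k == 0).
Proof.
move=> lt_k1m; have lt_km : k < m by lia.
rewrite /is_break !pedge_hook // /lower /upper.
have [i0 [j0 ->]] := mk_edgeE (hook_edge_bounds lt_km).1 (hook_edge_bounds lt_km).2.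
have [i1 [j1 _]] := mk_edgeE (hook_edge_bounds lt_k1m).1 (hook_edge_bounds lt_k1m).2.
rewrite i0 j0 i1 j1 xpair_eqE; move: lt_k1m; rewrite -addnn /hook_edge /=.
case: (ltnP k.+1 n); case: (ltnP k n); case: (eqVneq k 0) => [-> | k_ne0] /=; lia.
Qed.

Lemma breaks_hook : breaks hook_conf = 1.
Proof.
have lt0 : 0 < m.-1 by lia.
rewrite breaksE /breaks_before (bigD1 (Ordinal lt0)) //= big1 ?addn0.
  by rewrite hook_is_break //; lia.
move=> k; rewrite -val_eqE /= => k_ne0.
by rewrite hook_is_break ?(negPf k_ne0) //; have := ltn_ord k; lia.
Qed.

End OneBreak.

Section Plaquettes.
Variable n : nat.
Local Notation m := (n.*2).
Local Notation Conf := (Conf n).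
Local Notation Edge := (Edge n).
Local Open Scope nat_scope.

Lemma breaks_local_move (c c' : Conf) k : k.+1 < m ->
  (forall t, t < m -> t != k -> t != k.+1 -> pedge c' t = pedge c t) ->
  upper (pedge c' k) = upper (pedge c k) -> lower (pedge c' k.+1) = lower (pedge c k.+1) ->
  is_break c' k = is_break c k -> breaks c' = breaks c.
Proof.
move=> lt_k1m same up low brk_k; rewrite !breaksE /breaks_before.
apply: eq_bigr => -[t /= lt_t] _; have lt_t1m : t.+1 < m by lia.
have [-> | t_ne] := eqVneq t k; first by rewrite brk_k.
rewrite /is_break; have [t_eq | t1_ne] := eqVneq t k.+1.
  by rewrite t_eq low same //; apply/eqP; lia.
rewrite same //; last by lia.
by have [-> | t1_ne'] := eqVneq t.+1 k; [rewrite up | rewrite same //; apply/eqP; lia].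
Qed.

Lemma ketbra_entry_pedge (c' c : Conf) e' a' e a :
  [forall k : 'I_m, if k.+1 == line e then (cf c' k == (e', a')) && (cf c k == (e, a))
                    else cf c' k == cf c k] ->
  forall t, t < m -> if t.+1 == line e then pedge c' t = e' /\ pedge c t = e
                     else pedge c' t = pedge c t.
Proof.
move=> /forallP entry t lt_tm; have := entry (Ordinal lt_tm).
rewrite -[t]/(val (Ordinal lt_tm)) !pedge_ord.
by case: ifP => _ => [/andP[/eqP-> /eqP->] | /eqP->].
Qed.

Lemma plaquette_geometry (i j : 'I_n) :
  [/\ line (pl_e1 i j) = (i + j).+1, line (pl_e2 i j) = (i + j).+2 &
  [/\ upper (pl_e1 i j) = upper (pl_e3 i j), lower (pl_e2 i j) = lower (pl_e4 i j),
      lower (pl_e1 i j) = upper (pl_e2 i j) & lower (pl_e3 i j) = upper (pl_e4 i j)]].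
Proof.
rewrite /line /upper /lower /pl_e1 /pl_e2 /pl_e3 /pl_e4 /e_i /e_j /e_x /= /bump !leq0n /=.
by split; [lia | lia | split; congr pair; lia].
Qed.

(* The two hypotheses say that [c''] is [c] with the particle of line [i+j+2] moved
   from [pl_e2] to [pl_e4], and [c'] is [c''] with that of line [i+j+1] moved from
   [pl_e1] to [pl_e3]. *)
Lemma plaquette_move_breaks (i j : 'I_n) (c' c'' c : Conf) a b g d :
  [forall k : 'I_m, if k.+1 == line (pl_e1 i j)
     then (cf c' k == (pl_e3 i j, b)) && (cf c'' k == (pl_e1 i j, a))
     else cf c' k == cf c'' k] ->
  [forall k : 'I_m, if k.+1 == line (pl_e2 i j)
     then (cf c'' k == (pl_e4 i j, d)) && (cf c k == (pl_e2 i j, g))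
     else cf c'' k == cf c k] ->
  breaks c' = breaks c.
Proof.
have [line1 line2 [up13 low24 meet12 meet34]] := plaquette_geometry i j.
move=> entry1 entry2.
have move1 := ketbra_entry_pedge entry1; have move2 := ketbra_entry_pedge entry2.
rewrite line1 in move1; rewrite line2 in move2.
have lt_k1m : (i + j).+1 < m by have := ltn_ord i; have := ltn_ord j; lia.
have lt_km := ltnW lt_k1m.
have := move1 _ lt_km; rewrite eqxx => -[c'_k c''_k].
have := move2 _ lt_km; rewrite eqSS (ltn_eqF (ltnSn _)) c''_k => c_k.
have := move1 _ lt_k1m; rewrite eqSS (gtn_eqF (ltnSn _)) => c'_k1.
have := move2 _ lt_k1m; rewrite eqxx => -[c''_k1 c_k1].
apply: (breaks_local_move lt_k1m).
- move=> t lt_tm t_ne t1_ne; have := move1 _ lt_tm; have := move2 _ lt_tm.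
  by rewrite !eqSS (negPf t_ne) (negPf t1_ne) => -> ->.
- by rewrite c'_k -c_k up13.
- by rewrite c'_k1 c''_k1 c_k1 low24.
- by rewrite /is_break c'_k c'_k1 c''_k1 -c_k c_k1 meet12 meet34 !eqxx.
Qed.

End Plaquettes.

Section Hstring.
Variable n : nat.

Lemma Hstring_psd : psdmx (Hstring n).
Proof. by rewrite Hstring_breaks; apply: diagop_psd => c; apply: ler0n. Qed.

Lemma comm_Hstring_diagop f : comm_mx (Hstring n) (diagop f).
Proof. by rewrite Hstring_breaks; apply: comm_mx_diagop. Qed.

Lemma comm_Hstring_nop e a : comm_mx (Hstring n) (nop e a).
Proof. by rewrite nop_diagop; apply: comm_Hstring_diagop. Qed.

Lemma comm_Hstring_Nop e : comm_mx (Hstring n) (Nop e).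
Proof. by rewrite Nop_diagop; apply: comm_Hstring_diagop. Qed.

Lemma comm_Hstring_plaquette_hop (i j : 'I_n) a b g d :
  comm_mx (Hstring n)
    (ketbra (pl_e3 i j) b (pl_e1 i j) a *m ketbra (pl_e4 i j) d (pl_e2 i j) g).
Proof.
rewrite Hstring_breaks; apply: comm_mx_diagopP => i' j'; rewrite mxE.
have [k | none] := pickP (fun k => ketbra (pl_e3 i j) b (pl_e1 i j) a i' k *
                                   ketbra (pl_e4 i j) d (pl_e2 i j) g k j' != 0).
  rewrite mulf_eq0 negb_or !mxE !pnatr_eq0 !eqb0 !negbK => /andP[hop1 hop2] _.
  by rewrite (plaquette_move_breaks hop1 hop2).
by rewrite big1 ?eqxx // => k _; apply/eqP/negbFE/none.
Qed.

Lemma comm_Hstring_Hprop U (i j : 'I_n) : comm_mx (Hstring n) (Hprop U i j).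
Proof.
rewrite /Hprop /=; set hops := \sum_(a : bool) _.
have comm_hops : comm_mx (Hstring n) hops.
  by do 4! (apply: comm_mx_sum => ? _); apply/comm_mxZ/comm_Hstring_plaquette_hop.
apply: comm_mxB; first exact: comm_mxN.
exact: comm_mx_adj (esym Hstring_psd.1) comm_hops.
Qed.

Lemma comm_Hstring_Hlam U lam : comm_mx (Hstring n) (Hlam U lam).
Proof.
apply: comm_mxD; last by apply: comm_mx_sum => e _; apply: comm_Hstring_nop.
apply: comm_mxD; last first.
  by apply/comm_mxZ/comm_mxD; apply: comm_mx_sum => e _; apply: comm_Hstring_Nop.
apply: comm_mxD; first exact: comm_mx_refl.
apply: comm_mx_sum => i _; apply: comm_mx_sum => j _.
apply: comm_mxD; last by apply/comm_mxZ/comm_Hstring_Hprop.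
by apply: comm_mxD; apply: comm_mxM; apply: comm_Hstring_Nop.
Qed.

End Hstring.

Theorem mainTheorem3 (n : nat) (hn : (1 <= n)%N) :
  psdmx (Hstring n)
  /\ (forall v : 'cV[algC]_(hdim n),
        Hstring n *m v = 0 <->
        (forall i : 'I_(hdim n), ~~ is_string (conf_of i) -> v i ord0 = 0))
  /\ eigenvalue (Hstring n) 2
  /\ (forall a : algC, eigenvalue (Hstring n) a -> a != 0 -> 2 <= a)
  /\ (forall c : Conf n,
        Hstring n *m ket c = ((ncomp c)%:R *+ 2 - 2) *: ket c)
  /\ (forall (e : Edge n) (a : bool), edge_ok e ->
        Hstring n *m nop e a = nop e a *m Hstring n)
  /\ (forall (U : 'M[algC]_4) (i j : 'I_n), U \is unitarymx ->
        Hstring n *m Hprop U i j = Hprop U i j *m Hstring n)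
  /\ (forall (U : 'I_n -> 'I_n -> 'M[algC]_4) (lam : algC),
        (forall i j, U i j \is unitarymx) -> 0 <= lam <= 1 ->
        Hstring n *m Hlam U lam = Hlam U lam *m Hstring n).
Proof.
have energy_eq0 (c : Conf n) : ((breaks c).*2%:R == 0 :> algC) = is_string c.
  by rewrite pnatr_eq0 double_eq0 is_string_breaks.
split; first exact: Hstring_psd.
split.
  move=> v; rewrite Hstring_breaks diagop_mulmx_eq0.
  by split=> vanish i; [rewrite -energy_eq0 | rewrite energy_eq0]; apply: vanish.
split.
  rewrite Hstring_breaks; apply/eigenvalue_diagop.
  by exists (hook_conf hn); rewrite breaks_hook.
split.
  move=> a; rewrite Hstring_breaks => /eigenvalue_diagop[c <-].
  by rewrite pnatr_eq0 ler_nat; lia.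
split.
  move=> c; rewrite Hstring_breaks diagop_ket ncomp_breaks //.
  by congr (_ *: _); rewrite -addn1 natrD mulrnDl addrK -muln2 natrM mulr_natr.
do !split=> *.
- exact: comm_Hstring_nop.
- exact: comm_Hstring_Hprop.
- exact: comm_Hstring_Hlam.
Qed.
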